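(* Let $T,S\in\mathcal{B}_A(\mathcal{H})$. Then $$\omega_A(TS)\le \tfrac12\,\omega_A(ST)+\tfrac14\Big(\|T\|_A\|S\|_A+\|TS\|_A\Big).$$
   Context: $\mathcal{H}$ is a complex Hilbert space with inner product $\langle\cdot,\cdot\rangle$, and $A$ is a fixed nonzero positive bounded operator on $\mathcal{H}$. Set $\langle x,y\rangle_A=\langle Ax,y\rangle$ and $\|x\|_A=\|A^{1/2}x\|$. $\mathcal{B}_A(\mathcal{H})$ is the set of bounded operators $T$ for which there exists a bounded $S$ with $\langle Tx,y\rangle_A=\langle x,Sy\rangle_A$ for all $x,y$ (equivalently $\mathcal{R}(T^*A)\subseteq\mathcal{R}(A)$). For an operator $T$ with $\|Tx\|_A\le\lambda\|x\|_A$ for some $\lambda>0$ and all $x$, $\|T\|_A=\sup\{\|Tx\|_A: \|x\|_A=1\}$, and $\omega_A(T)=\sup\{|\langle Tx,x\rangle_A|:\|x\|_A=1\}$ is the $A$-numerical radius. *)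

From HB Require Import structures.
From mathcomp Require Import all_boot all_order all_algebra.
From mathcomp Require Import complex.
From mathcomp Require Import boolp classical_sets reals.
Set Implicit Arguments. Unset Strict Implicit. Unset Printing Implicit Defensive.
Import Order.TTheory GRing.Theory Num.Theory.
Local Open Scope ring_scope.
Local Open Scope classical_set_scope.

Section Hilbert.
Variables (R : realType) (V : lmodType R[i]) (ip : V -> V -> R[i]).

Definition hnorm (x : V) : R := Num.sqrt (complex.Re (ip x x)).

Record is_hilbert : Prop := IsHilbert {
  ip_linear : forall (a : R[i]) (x y z : V), ip (a *: x + y) z = a * ip x z + ip y z;
  ip_conj : forall x y : V, ip y x = conjc (ip x y);
  ip_pos : forall x : V, 0 <= ip x x;
  ip_definite : forall x : V, ip x x = 0 -> x = 0;
  ip_complete : forall u : nat -> V,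
    (forall e : R, 0 < e -> exists N : nat, forall m n : nat,
        (N <= m)%N -> (N <= n)%N -> hnorm (u m - u n) < e) ->
    exists l : V, forall e : R, 0 < e -> exists N : nat, forall n : nat,
        (N <= n)%N -> hnorm (u n - l) < e
}.

Definition bounded_op (T : V -> V) : Prop :=
  (forall (a : R[i]) (x y : V), T (a *: x + y) = a *: T x + T y) /\
  exists M : R, forall x : V, hnorm (T x) <= M * hnorm x.

Definition positive_op (A : V -> V) : Prop :=
  bounded_op A /\ forall x : V, 0 <= ip (A x) x.

Variable A : V -> V.

Definition ipA (x y : V) : R[i] := ip (A x) y.

(* ||x||_A = ||A^{1/2} x|| = sqrt <Ax, x> *)
Definition normA (x : V) : R := Num.sqrt (complex.Re (ipA x x)).

Definition BA (T : V -> V) : Prop :=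
  bounded_op T /\ exists S : V -> V, bounded_op S /\
    forall x y : V, ipA (T x) y = ipA x (S y).

Definition opnormA (T : V -> V) : R :=
  sup [set normA (T x) | x in [set x : V | normA x = 1]].

Definition omegaA (T : V -> V) : R :=
  sup [set ComplexField.Normc.normc (ipA (T x) x) | x in [set x : V | normA x = 1]].

End Hilbert.

From HB Require Import structures.
From mathcomp Require Import all_boot all_order all_algebra.
From mathcomp Require Import complex.
From mathcomp Require Import boolp classical_sets reals.
From mathcomp Require Import ring lra.
Import Order.TTheory GRing.Theory Num.Theory.
Set Implicit Arguments. Unset Strict Implicit. Unset Printing Implicit Defensive.
Local Open Scope ring_scope.
Local Open Scope classical_set_scope.

(** Fix a unimodular [u]; it suffices to bound [Re (u <TS x, x>_A)] by
    [B = omega_A(ST)/2 + (|T|_A |S|_A + |TS|_A)/4] on A-unit vectors, and we may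
    assume [|T|_A, |S|_A > 0].  Let [lam] be the supremum of [Re (u <TS x, x>_A)]
    over A-unit vectors and suppose [lam > B].  Then [g = 2 lam - (u TS + (u TS)^#)]
    ([^#] the A-adjoint) is a positive A-form.  With [k = |T|_A / |S|_A] and
    [M = k S^# S + k^-1 T T^#] one has [Re g(x, M x) >= 2 (lam - B) <x, M x>_A]
    and [<x, M x>_A >= 2 Re (u <TS x, x>_A)], so for an almost maximizing unit
    vector [x], [g(x, M x)] stays away from [0] while [g(x, x)] is almost [0],
    contradicting Cauchy-Schwarz for [g].  The bound on [Re g(x, M x)] splits into
    an [omega_A(ST)] part and the estimate
    [k^-1 |T z|_A^2 + k |S^# z|_A^2 <= (|T|_A |S|_A + |TS|_A) |z|_A^2].
    Since [A] need not be injective, the operators of [B_A(H)] are bounded for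
    [|.|_A] only because of the adjoint identity: for the A-selfadjoint
    contraction [R = X^# X / c], iterating [|R y|_A^2 <= |R^2 y|_A |y|_A] along
    [R^(2^n)] gives [|R y|_A <= |y|_A]. *)

Section ComplexFacts.
Variable R : realType.
Implicit Types (a b u z : R[i]) (k : R).
Local Notation normc := (@ComplexField.Normc.normc R).

Lemma complex_ext a b :
  complex.Re a = complex.Re b -> complex.Im a = complex.Im b -> a = b.
Proof. by case: a => ? ?; case: b => ? ? /= -> ->. Qed.

Lemma Re_add a b : complex.Re (a + b) = complex.Re a + complex.Re b.
Proof. by case: a; case: b. Qed.

Lemma Im_add a b : complex.Im (a + b) = complex.Im a + complex.Im b.
Proof. by case: a; case: b. Qed.

Lemma Re_opp a : complex.Re (- a) = - complex.Re a.
Proof. by case: a. Qed.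

Lemma Re_mul a b :
  complex.Re (a * b) = complex.Re a * complex.Re b - complex.Im a * complex.Im b.
Proof. by case: a; case: b. Qed.

Lemma Im_mul a b :
  complex.Im (a * b) = complex.Re a * complex.Im b + complex.Im a * complex.Re b.
Proof. by case: a; case: b. Qed.

Lemma Re_conj a : complex.Re (conjc a) = complex.Re a.
Proof. by case: a. Qed.

Lemma Im_conj a : complex.Im (conjc a) = - complex.Im a.
Proof. by case: a. Qed.

Lemma Re_realM k z : complex.Re (k%:C%C * z) = k * complex.Re z.
Proof. by rewrite Re_mul /= mul0r subr0. Qed.

Lemma normc_ge0 a : 0 <= normc a.
Proof. by case: a => ? ?; apply: sqrtr_ge0. Qed.

Lemma normc_sqr a : normc a ^+ 2 = complex.Re a ^+ 2 + complex.Im a ^+ 2.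
Proof. by case: a => ? ? /=; rewrite sqr_sqrtr // addr_ge0 ?sqr_ge0. Qed.

Lemma normc_conj a : normc (conjc a) = normc a.
Proof. by case: a => ? ? /=; rewrite sqrrN. Qed.

Lemma normc_real k : normc k%:C%C = `|k|.
Proof. by rewrite /= expr0n /= addr0 sqrtr_sqr. Qed.

Lemma Re_le_normc a : complex.Re a <= normc a.
Proof.
have := normc_ge0 a; have := normc_sqr a.
have [a_le0|] := leP (complex.Re a) 0; last nra.
by move=> _; apply: le_trans.
Qed.

Lemma Re_unitM_le u z : normc u = 1 -> complex.Re (u * z) <= normc z.
Proof.
by move=> u1; apply: le_trans (Re_le_normc _) _; rewrite ComplexField.Normc.normcM u1 mul1r.
Qed.

Lemma Re_unitM_realM_le u k z : normc u = 1 -> 0 <= k ->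
  complex.Re (u * (k%:C%C * z)) <= k * normc z.
Proof. by move=> u1 k0; rewrite mulrCA Re_realM ler_wpM2l // Re_unitM_le. Qed.

Lemma Re_unitM_normc z : exists2 u, normc u = 1 & complex.Re (u * z) = normc z.
Proof.
have [->|z_neq0] := eqVneq z 0.
  by exists 1; rewrite ?mulr0 ?ComplexField.Normc.normc0 ?ComplexField.Normc.normc1.
have nz_gt0 : 0 < normc z.
  rewrite lt_def normc_ge0 andbT; apply: contra z_neq0 => /eqP.
  by move/ComplexField.Normc.eq0_normc => ->.
exists (((normc z)^-1)%:C%C * conjc z).
  rewrite ComplexField.Normc.normcM normc_real normc_conj.
  by rewrite ger0_norm ?invr_ge0 ?normc_ge0 // mulVf // gt_eqF.
rewrite -mulrA Re_realM Re_mul Re_conj Im_conj.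
have -> : complex.Re z * complex.Re z - - complex.Im z * complex.Im z = normc z ^+ 2.
  by rewrite normc_sqr; ring.
by rewrite expr2 mulKf // gt_eqF.
Qed.

End ComplexFacts.

Section RealFacts.
Variable R : realType.
Implicit Types x y : R.

Lemma le_of_sqr_le x y : 0 <= y -> x ^+ 2 <= y ^+ 2 -> x <= y.
Proof. by move=> y0 xy; have [x_le0|] := leP x 0; [apply: le_trans y0|nra]. Qed.

Lemma sqr_le_sqr x y : 0 <= x -> x <= y -> x ^+ 2 <= y ^+ 2.
Proof. by move=> x0 xy; rewrite ler_sqr ?nnegrE // (le_trans x0). Qed.

Lemma bernoulli_ineq x n : 1 <= x -> 1 + n%:R * (x - 1) <= x ^+ n.
Proof.
move=> x_ge1; elim: n => [|n IH]; first by rewrite mul0r addr0 expr0.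
rewrite exprS -natr1.
have : x * (1 + n%:R * (x - 1)) <= x * x ^+ n by rewrite ler_pM2l ?(lt_le_trans ltr01).
have : 0 <= n%:R * ((x - 1) * (x - 1)) by rewrite mulr_ge0 ?mulr_ge0 ?subr_ge0.
nra.
Qed.

Lemma amgm_weighted (k s t : R) : 0 < k -> 2 * s * t <= k * s ^+ 2 + k^-1 * t ^+ 2.
Proof.
move=> k_gt0; have : 0 <= k^-1 * (k * s - t) ^+ 2 by rewrite mulr_ge0 ?sqr_ge0 // invr_ge0 ltW.
have -> : k^-1 * (k * s - t) ^+ 2 = (k * k^-1) * (k * s ^+ 2) - 2 * (k * k^-1) * s * t
                                    + k^-1 * t ^+ 2 by ring.
by rewrite mulfV ?gt_eqF // !mul1r mulr1; lra.
Qed.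

(* Cauchy-Schwarz for the weights (1/k, k), followed by [amgm_weighted]. *)
Lemma weighted_product_le (k N a1 b1 a2 b2 p q : R) :
  0 < k -> 0 <= p -> 0 <= q -> 0 <= N ->
  k^-1 * a1 ^+ 2 + k * b1 ^+ 2 <= N * p ^+ 2 ->
  k^-1 * a2 ^+ 2 + k * b2 ^+ 2 <= N * q ^+ 2 ->
  k^-1 * a1 * a2 + k * b1 * b2 <= N / 2 * (k * p ^+ 2 + k^-1 * q ^+ 2).
Proof.
move=> k_gt0 p0 q0 N0 h1 h2; have kV_gt0 : 0 < k^-1 by rewrite invr_gt0.
have cs : (k^-1 * a1 * a2 + k * b1 * b2) ^+ 2
    <= (k^-1 * a1 ^+ 2 + k * b1 ^+ 2) * (k^-1 * a2 ^+ 2 + k * b2 ^+ 2).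
  have -> : (k^-1 * a1 ^+ 2 + k * b1 ^+ 2) * (k^-1 * a2 ^+ 2 + k * b2 ^+ 2)
      = (k^-1 * a1 * a2 + k * b1 * b2) ^+ 2 + (k * k^-1) * (a1 * b2 - b1 * a2) ^+ 2 by ring.
  by rewrite mulfV ?gt_eqF // mul1r lerDl sqr_ge0.
have : k^-1 * a1 * a2 + k * b1 * b2 <= N * p * q.
  apply: le_of_sqr_le; first by rewrite !mulr_ge0.
  apply: le_trans cs _; have -> : (N * p * q) ^+ 2 = (N * p ^+ 2) * (N * q ^+ 2) by ring.
  by apply: ler_pM => //; rewrite addr_ge0 // mulr_ge0 ?sqr_ge0 // ltW.
have := ler_wpM2l N0 (amgm_weighted p q k_gt0).
lra.
Qed.

Lemma discriminant_le (n d c : R) : 0 <= n -> 0 <= c ->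
  (forall t, 0 <= d - 2 * t * n + t ^+ 2 * n * c) -> n <= d * c.
Proof.
move=> n0 c0 quad_ge0; have [c_gt0|] := ltP 0 c.
  have := quad_ge0 c^-1.
  have -> : d - 2 * c^-1 * n + c^-1 ^+ 2 * n * c = d - c^-1 * n.
    by field; rewrite gt_eqF.
  by rewrite subr_ge0 ler_pdivrMl // mulrC.
rewrite le_eqVlt ltNge c0 orbF => /eqP c_eq0; rewrite c_eq0 mulr0 in quad_ge0 *.
have [->//|n_neq0] := eqVneq n 0.
have := quad_ge0 ((d + 1) / (2 * n)); rewrite mulr0 addr0.
have -> : 2 * ((d + 1) / (2 * n)) * n = d + 1 by field.
lra.
Qed.

Lemma bounded_sqr_chain_le (f : nat -> R) (a C : R) : 0 <= a ->
  (forall n, 0 <= f n) -> (forall n, f n ^+ 2 <= f n.+1 * a) ->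
  (forall n, f n <= C) -> f 0%N <= a.
Proof.
move=> a0 f_ge0 f_sqr f_le; rewrite leNgt; apply/negP => a_lt.
have a_gt0 : 0 < a.
  rewrite lt_def a0 andbT; apply/eqP => a_eq0.
  by have := f_sqr 0%N; have := f_ge0 0%N; rewrite a_eq0 in a_lt *; nra.
pose q := f 0%N / a.
have q_gt1 : 1 < q by rewrite ltr_pdivlMr // mul1r.
have f_ge n : q ^+ (2 ^ n) * a <= f n.
  elim: n => [|n IH]; first by rewrite expn0 expr1 divfK ?gt_eqF.
  rewrite -(ler_pM2r a_gt0); apply: le_trans (f_sqr n).
  have -> : q ^+ (2 ^ n.+1) * a * a = (q ^+ (2 ^ n) * a) ^+ 2.
    by rewrite expnS mul2n -addnn exprD; ring.
  by apply: sqr_le_sqr IH; rewrite mulr_ge0 ?exprn_ge0 ?(ltW a_gt0) // ltW // (lt_trans ltr01).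
have qa_gt0 : 0 < (q - 1) * a by rewrite mulr_gt0 // subr_gt0.
have C_ge0 : 0 <= C := le_trans (f_ge0 0%N) (f_le 0%N).
have [n n_gt] : exists n : nat, C / ((q - 1) * a) < n%:R.
  by exists (Num.bound (C / ((q - 1) * a))); rewrite archi_boundP // divr_ge0 // ltW.
have : n%:R * ((q - 1) * a) <= C.
  apply: le_trans (f_le n); apply: le_trans (f_ge n); rewrite mulrA ler_pM2r //.
  apply: le_trans (bernoulli_ineq (2 ^ n) (ltW q_gt1)).
  have : (n%:R : R) <= (2 ^ n)%:R by rewrite ler_nat ltnW // ltn_expl.
  have : 0 < q - 1 by rewrite subr_gt0.
  nra.
by rewrite ltr_pdivrMr // in n_gt; lra.
Qed.

End RealFacts.

Section HermitianForm.
Variables (R : realType) (V : lmodType R[i]) (f : V -> V -> R[i]).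
Hypothesis formL : forall (a : R[i]) x y z, f (a *: x + y) z = a * f x z + f y z.
Hypothesis formJ : forall x y, f y x = conjc (f x y).
Hypothesis form_ge0 : forall x, 0 <= complex.Re (f x x).
Local Notation normc := (@ComplexField.Normc.normc R).

Lemma form0l z : f 0 z = 0.
Proof.
by apply: (@addrI _ (f 0 z)); rewrite addr0 -{1}(mul1r (f 0 z)) -formL scaler0 addr0.
Qed.

Lemma formDl x y z : f (x + y) z = f x z + f y z.
Proof. by rewrite -[x in LHS]scale1r formL mul1r. Qed.

Lemma formZl a x z : f (a *: x) z = a * f x z.
Proof. by rewrite -[_ *: _]addr0 formL form0l addr0. Qed.

Lemma formDr x y z : f z (x + y) = f z x + f z y.
Proof. by rewrite formJ formDl rmorphD /= -!formJ. Qed.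

Lemma formZr a x z : f z (a *: x) = conjc a * f z x.
Proof. by rewrite formJ formZl rmorphM /= -formJ. Qed.

Lemma Im_form_diag x : complex.Im (f x x) = 0.
Proof.
have /eqP := congr1 (@complex.Im R) (formJ x x); rewrite Im_conj.
by rewrite -subr_eq0 opprK -mulr2n mulrn_eq0 => /eqP.
Qed.

Lemma Re_formC x y : complex.Re (f y x) = complex.Re (f x y).
Proof. by rewrite formJ Re_conj. Qed.

Lemma Im_formC x y : complex.Im (f y x) = - complex.Im (f x y).
Proof. by rewrite formJ Im_conj. Qed.

Lemma form_cauchy_schwarz x y :
  complex.Re (f x y) ^+ 2 + complex.Im (f x y) ^+ 2
    <= complex.Re (f x x) * complex.Re (f y y).
Proof.
apply: discriminant_le; rewrite ?addr_ge0 ?sqr_ge0 // => t.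
have := form_ge0 (x + ((- t)%:C%C * f x y) *: y).
rewrite formDl !formDr !formZl !formZr.
rewrite !(Re_add, Re_mul, Im_mul, Im_add, Re_conj, Im_conj) /= !Im_form_diag.
rewrite (Re_formC x y) (Im_formC x y).
by move/le_trans; apply; rewrite le_eqVlt; apply/orP; left; apply/eqP; ring.
Qed.

Definition fnorm x := Num.sqrt (complex.Re (f x x)).

Lemma fnorm_ge0 x : 0 <= fnorm x.
Proof. exact: sqrtr_ge0. Qed.

Lemma fnorm_sqr x : fnorm x ^+ 2 = complex.Re (f x x).
Proof. by rewrite sqr_sqrtr. Qed.

Lemma normc_form_le x y : normc (f x y) <= fnorm x * fnorm y.
Proof.
apply: le_of_sqr_le; first by rewrite mulr_ge0 ?fnorm_ge0.
by rewrite normc_sqr exprMn !fnorm_sqr form_cauchy_schwarz.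
Qed.

Lemma Re_form_le x y : complex.Re (f x y) <= fnorm x * fnorm y.
Proof. exact: le_trans (Re_le_normc _) (normc_form_le x y). Qed.

Lemma fnormZ a x : fnorm (a *: x) = normc a * fnorm x.
Proof.
rewrite /fnorm; have -> : complex.Re (f (a *: x) (a *: x)) = normc a ^+ 2 * complex.Re (f x x).
  rewrite formZl formZr !(Re_mul, Im_mul, Re_conj, Im_conj) Im_form_diag normc_sqr.
  ring.
by rewrite sqrtrM ?sqr_ge0 // sqrtr_sqr ger0_norm ?normc_ge0.
Qed.

Lemma fnorm_realZ (c : R) x : 0 <= c -> fnorm (c%:C%C *: x) = c * fnorm x.
Proof. by move=> c0; rewrite fnormZ normc_real ger0_norm. Qed.

Lemma fnormD_le x y : fnorm (x + y) <= fnorm x + fnorm y.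
Proof.
apply: le_of_sqr_le; first by rewrite addr_ge0 ?fnorm_ge0.
rewrite fnorm_sqr formDl !formDr !Re_add (Re_formC x y) sqrrD !fnorm_sqr.
have := Re_form_le x y; lra.
Qed.

End HermitianForm.

Section LinearOp.
Variables (R : realType) (V : lmodType R[i]).

Definition linear_op (X : V -> V) : Prop :=
  forall (a : R[i]) x y, X (a *: x + y) = a *: X x + X y.

Lemma linear_opZ X : linear_op X -> forall a x, X (a *: x) = a *: X x.
Proof.
move=> linX a x; have X0 : X 0 = 0.
  by apply: (@addrI _ (X 0)); rewrite addr0 -{1}(scale1r (X 0)) -linX scaler0 addr0.
by rewrite -[_ *: x]addr0 linX X0 addr0.
Qed.

Lemma linear_opD X : linear_op X -> forall x y, X (x + y) = X x + X y.
Proof. by move=> linX x y; rewrite -[x in LHS]scale1r linX scale1r. Qed.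

Lemma linear_op_comp X Y : linear_op X -> linear_op Y -> linear_op (X \o Y).
Proof. by move=> linX linY a x y /=; rewrite linY linX. Qed.

End LinearOp.

Section PositiveOperator.
Variables (R : realType) (V : lmodType R[i]) (ip : V -> V -> R[i]) (A : V -> V).
Hypothesis hH : is_hilbert ip.
Hypothesis hA : positive_op ip A.
Local Notation iA := (ipA ip A).

Lemma Re_ip_ge0 x : 0 <= complex.Re (ip x x).
Proof. by have := ip_pos hH x; rewrite lecE => /andP[]. Qed.

Lemma ipA_diag x : complex.Im (iA x x) = 0 /\ 0 <= complex.Re (iA x x).
Proof. by case: hA => _ /(_ x); rewrite lecE /= => /andP[/eqP]. Qed.

Lemma ipA_linear a x y z : iA (a *: x + y) z = a * iA x z + iA y z.
Proof. by case: hA => [[linA _] _]; rewrite /ipA linA ip_linear. Qed.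

(* A positive operator is selfadjoint: polarize at [x + y] and [x + i y]. *)
Lemma ipA_conj x y : iA y x = conjc (iA x y).
Proof.
have [[linA _] _] := hA; have ipL := ip_linear hH; have ipJ := ip_conj hH.
have e1 := (ipA_diag (x + y)).1; have e2 := (ipA_diag (x + 'i%C *: y)).1.
rewrite /ipA (linear_opD linA) (linear_opZ linA) in e2.
rewrite /ipA (linear_opD linA) in e1.
rewrite !(formDl ipL, formZl ipL, formDr ipL ipJ, formZr ipL ipJ) in e1 e2.
rewrite !(Im_add, Im_mul, Re_mul, Re_add) /= in e1 e2.
move: e1 e2; rewrite -!/(ipA ip A _ _) (ipA_diag x).1 (ipA_diag y).1 => e1 e2.
by apply: complex_ext; rewrite ?Re_conj ?Im_conj; lra.
Qed.

Lemma ipA_Re_ge0 x : 0 <= complex.Re (iA x x).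
Proof. exact: (ipA_diag x).2. Qed.

End PositiveOperator.

Section NormABounds.
Variables (R : realType) (V : lmodType R[i]) (ip : V -> V -> R[i]) (A : V -> V).
Hypothesis hH : is_hilbert ip.
Hypothesis hA : positive_op ip A.
Local Notation iA := (ipA ip A).
Local Notation nA := (fnorm iA).
Local Notation hn := (fnorm ip).
Let ipL := ip_linear hH.
Let ipJ := ip_conj hH.
Let ip_ge0 := Re_ip_ge0 hH.
Let iAL := ipA_linear hH hA.
Let iAJ := ipA_conj hH hA.
Let iA_ge0 := ipA_Re_ge0 hA.

Lemma normA_le_norm : exists K, 0 <= K /\ forall z, nA z <= K * hn z.
Proof.
have [[_ [M hM]] _] := hA; exists (Num.sqrt `|M|); split => [|z]; first exact: sqrtr_ge0.
apply: le_of_sqr_le; first by rewrite mulr_ge0 ?sqrtr_ge0 ?fnorm_ge0.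
rewrite exprMn (sqr_sqrtr (normr_ge0 M)) (fnorm_sqr iA_ge0).
apply: le_trans (Re_form_le ipL ipJ ip_ge0 (A z) z) _.
rewrite expr2 mulrA ler_wpM2r ?fnorm_ge0 //.
by apply: le_trans (hM z) _; rewrite ler_wpM2r ?fnorm_ge0 ?ler_norm.
Qed.

(* The powers [Rc^(2^n)] are contractions for [hn], hence bounded for [nA]. *)
Lemma normA_contraction (Rc : V -> V) :
  (forall y, hn (Rc y) <= hn y) -> (forall y z, iA (Rc y) z = iA y (Rc z)) ->
  forall y, nA (Rc y) <= nA y.
Proof.
move=> Rc_contr Rc_sym y; have [K [K0 hK]] := normA_le_norm.
have Rc_iter_sym j y' z : iA (iter j Rc y') z = iA y' (iter j Rc z).
  by elim: j y' z => [|j IH] y' z //=; rewrite Rc_sym IH -iterSr.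
have Rc_iter_contr j : hn (iter j Rc y) <= hn y.
  by elim: j => [|j IH] //=; apply: le_trans (Rc_contr _) IH.
apply: (@bounded_sqr_chain_le _ (fun n => nA (iter (2 ^ n) Rc y)) _ (K * hn y)).
- exact: fnorm_ge0.
- by move=> n; apply: fnorm_ge0.
- move=> n; rewrite (fnorm_sqr iA_ge0) Rc_iter_sym -iterD addnn -mul2n -expnS mulrC.
  exact: Re_form_le.
- by move=> n; apply: le_trans (hK _) _; rewrite ler_wpM2l.
Qed.

Lemma normA_bounded_of_adjoint (X X' : V -> V) (M1 M2 : R) :
  (forall x, hn (X x) <= M1 * hn x) -> (forall x, hn (X' x) <= M2 * hn x) ->
  (forall x y, iA (X x) y = iA x (X' y)) ->
  exists c, forall y, nA (X y) <= c * nA y.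
Proof.
move=> hX hX' adjX.
pose M := `|M1| * `|M2| + 1.
have M_gt0 : 0 < M by rewrite ltr_pwDr // mulr_ge0.
have hX1 x : hn (X x) <= `|M1| * hn x.
  exact: le_trans (hX x) (ler_wpM2r (fnorm_ge0 _ _) (ler_norm M1)).
have hX'1 x : hn (X' x) <= `|M2| * hn x.
  exact: le_trans (hX' x) (ler_wpM2r (fnorm_ge0 _ _) (ler_norm M2)).
have hnX'X y : hn (X' (X y)) <= M * hn y.
  apply: le_trans (hX'1 _) _; apply: le_trans (ler_wpM2l (normr_ge0 M2) (hX1 y)) _.
  by rewrite mulrA [_ * `|M1|]mulrC ler_wpM2r ?fnorm_ge0 ?lerDl.
pose Rc y := (M^-1)%:C%C *: X' (X y).
have nA_X'X y : nA (X' (X y)) <= M * nA y.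
  have Rc_contr z : hn (Rc z) <= hn z.
    by rewrite (fnormZ ipL ipJ) normc_real ger0_norm ?invr_ge0 ?(ltW M_gt0) // ler_pdivrMl.
  have Rc_sym z z' : iA (Rc z) z' = iA z (Rc z').
    rewrite (formZl iAL) (formZr iAL iAJ) conjc_real; congr (_ * _).
    by rewrite iAJ -adjX -iAJ adjX.
  have := normA_contraction Rc_contr Rc_sym y.
  by rewrite (fnormZ iAL iAJ) normc_real ger0_norm ?invr_ge0 ?(ltW M_gt0) // ler_pdivrMl.
exists (Num.sqrt M) => y; apply: le_of_sqr_le; first by rewrite mulr_ge0 ?sqrtr_ge0 ?fnorm_ge0.
rewrite exprMn (sqr_sqrtr (ltW M_gt0)) (fnorm_sqr iA_ge0) adjX.
apply: le_trans (Re_form_le iAL iAJ iA_ge0 _ _) _.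
by rewrite mulrC expr2 mulrA ler_wpM2r ?fnorm_ge0.
Qed.

Lemma BA_normA_bounded X : BA ip A X -> exists c, forall y, nA (X y) <= c * nA y.
Proof.
case=> [[_ [M1 hX]] [X' [[_ [M2 hX']] adjX]]].
exact: normA_bounded_of_adjoint hX hX' adjX.
Qed.

Lemma adjoint_normA_le (X X' : V -> V) (c : R) : 0 <= c ->
  (forall x y, iA (X x) y = iA x (X' y)) -> (forall y, nA (X y) <= c * nA y) ->
  forall y, nA (X' y) <= c * nA y.
Proof.
move=> c0 adjX hX y; have [->|nX'y_neq0] := eqVneq (nA (X' y)) 0.
  by rewrite mulr_ge0 ?fnorm_ge0.
have : nA (X' y) ^+ 2 <= c * nA (X' y) * nA y.
  rewrite (fnorm_sqr iA_ge0) -adjX; apply: le_trans (Re_form_le iAL iAJ iA_ge0 _ _) _.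
  by rewrite ler_wpM2r ?fnorm_ge0.
have : 0 < nA (X' y) by rewrite lt_def nX'y_neq0 fnorm_ge0.
nra.
Qed.

End NormABounds.

Section Suprema.
Variables (R : realType) (V : lmodType R[i]) (ip : V -> V -> R[i]) (A : V -> V).
Hypothesis hH : is_hilbert ip.
Hypothesis hA : positive_op ip A.
Local Notation normc := (@ComplexField.Normc.normc R).
Local Notation iA := (ipA ip A).
Local Notation nA := (fnorm iA).
Let iAL := ipA_linear hH hA.
Let iAJ := ipA_conj hH hA.
Let iA_ge0 := ipA_Re_ge0 hA.

Lemma exists_normA_eq1 : (exists x, A x <> 0) -> exists e, nA e = 1.
Proof.
case=> x Ax_neq0; have [y ny_neq0] : exists y, nA y != 0.
  apply: contrapT => /forallNP nA_eq0; apply/Ax_neq0/(ip_definite hH).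
  apply: ComplexField.Normc.eq0_normc; apply/eqP; rewrite eq_le normc_ge0 andbT.
  have := normc_form_le iAL iAJ iA_ge0 x (A x).
  by have /negP/negbNE/eqP-> := nA_eq0 x; rewrite mul0r.
exists ((nA y)^-1%:C%C *: y).
by rewrite (fnormZ iAL iAJ) normc_real ger0_norm ?invr_ge0 ?fnorm_ge0 ?mulVf.
Qed.

Lemma le_normA_homogeneous (F : V -> R) (d : nat) (s : R) : (0 < d)%N ->
  (forall (c : R) y, 0 < c -> F (c%:C%C *: y) = c ^+ d * F y) ->
  (forall y, nA y = 0 -> F y <= 0) -> (forall y, nA y = 1 -> F y <= s) ->
  forall y, F y <= s * nA y ^+ d.
Proof.
move=> d_gt0 F_hom F_null F_unit y; have [ny0|ny_neq0] := eqVneq (nA y) 0.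
  by rewrite ny0 expr0n eqn0Ngt d_gt0 /= mulr0; apply: F_null.
have ny_gt0 : 0 < nA y by rewrite lt_def ny_neq0 fnorm_ge0.
have := F_unit ((nA y)^-1%:C%C *: y).
rewrite F_hom ?invr_gt0 // (fnormZ iAL iAJ) normc_real gtr0_norm ?invr_gt0 // mulVf //.
by rewrite exprVn ler_pdivrMl ?exprn_gt0 // mulrC => /(_ erefl).
Qed.

Variable X : V -> V.
Hypothesis linX : linear_op X.
Hypothesis boundX : exists c, forall y, nA (X y) <= c * nA y.
Hypothesis unit_ex : exists e, nA e = 1.

Lemma normA_unit_le_opnormA x : nA x = 1 -> nA (X x) <= opnormA ip A X.
Proof.
move=> x1; apply: ub_le_sup; last by exists x.
by have [c hc] := boundX; exists c => _ [z /= z1 <-]; rewrite -[c]mulr1 -z1; apply: hc.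
Qed.

Lemma opnormA_ge0 : 0 <= opnormA ip A X.
Proof. by have [e /normA_unit_le_opnormA] := unit_ex; apply: le_trans; apply: fnorm_ge0. Qed.

Lemma normA_le_opnormA y : nA (X y) <= opnormA ip A X * nA y.
Proof.
apply: (@le_normA_homogeneous (fun z => nA (X z)) 1) => //.
- by move=> c z c_gt0; rewrite (linear_opZ linX) (fnormZ iAL iAJ) normc_real gtr0_norm.
- by have [c hc] := boundX; move=> z z0; have := hc z; rewrite z0 mulr0.
- exact: normA_unit_le_opnormA.
Qed.

Lemma normc_unit_le_omegaA x : nA x = 1 -> normc (iA (X x) x) <= omegaA ip A X.
Proof.
move=> x1; apply: ub_le_sup; last by exists x.
have [c hc] := boundX; exists c => _ [z /= z1 <-].
apply: le_trans (normc_form_le iAL iAJ iA_ge0 (X z) z) _.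
have nz1 : nA z = 1 := z1.
by rewrite nz1 mulr1 -[c]mulr1 -nz1; apply: hc.
Qed.

Lemma omegaA_ge0 : 0 <= omegaA ip A X.
Proof. by have [e /normc_unit_le_omegaA] := unit_ex; apply: le_trans; apply: normc_ge0. Qed.

Lemma normc_ipA_le_omegaA y : normc (iA (X y) y) <= omegaA ip A X * nA y ^+ 2.
Proof.
apply: (@le_normA_homogeneous (fun z => normc (iA (X z) z)) 2) => //.
- move=> c z c_gt0; rewrite (linear_opZ linX) (formZl iAL) (formZr iAL iAJ) conjc_real.
  by rewrite !ComplexField.Normc.normcM normc_real gtr0_norm // mulrA expr2.
- by move=> z z0; apply: le_trans (normc_form_le iAL iAJ iA_ge0 (X z) z) _; rewrite z0 mulr0.
- exact: normc_unit_le_omegaA.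
Qed.

End Suprema.

Section GapForm.
Variables (R : realType) (V : lmodType R[i]) (ip : V -> V -> R[i]) (A : V -> V).
Hypothesis hH : is_hilbert ip.
Hypothesis hA : positive_op ip A.
Local Notation iA := (ipA ip A).
Local Notation nA := (fnorm iA).
Let iAL := ipA_linear hH hA.
Let iAJ := ipA_conj hH hA.
Let iA_ge0 := ipA_Re_ge0 hA.
Variables (X : V -> V) (u : R[i]) (lam : R).
Hypothesis linX : linear_op X.

(* The form of the operator [2 lam - (u X + (u X)^#)], [^#] the A-adjoint. *)
Definition gap_form y z :=
  (2 * lam)%:C%C * iA y z - (u * iA (X y) z + conjc u * iA y (X z)).

Lemma gap_form_linear a y y' z :
  gap_form (a *: y + y') z = a * gap_form y z + gap_form y' z.
Proof. by rewrite /gap_form linX !iAL; ring. Qed.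

Lemma gap_form_conj y z : gap_form z y = conjc (gap_form y z).
Proof.
rewrite /gap_form (rmorphB conjc) (rmorphD conjc) !(rmorphM conjc) /=.
by rewrite oppr0 complexr0 conjcK -!iAJ; ring.
Qed.

Lemma Re_gap_form_diag y :
  complex.Re (gap_form y y) = 2 * lam * nA y ^+ 2 - 2 * complex.Re (u * iA (X y) y).
Proof.
rewrite /gap_form Re_add Re_opp Re_add Re_realM (fnorm_sqr iA_ge0).
by rewrite (iAJ (X y) y) -rmorphM Re_conj; ring.
Qed.

Hypothesis Re_le_lam : forall y, complex.Re (u * iA (X y) y) <= lam * nA y ^+ 2.

Lemma gap_form_ge0 y : 0 <= complex.Re (gap_form y y).
Proof. by rewrite Re_gap_form_diag; have := Re_le_lam y; lra. Qed.

End GapForm.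

Section TSBound.
Variables (R : realType) (V : lmodType R[i]) (ip : V -> V -> R[i]) (A : V -> V).
Hypothesis hH : is_hilbert ip.
Hypothesis hA : positive_op ip A.
Local Notation normc := (@ComplexField.Normc.normc R).
Local Notation iA := (ipA ip A).
Local Notation nA := (fnorm iA).
Let iAL := ipA_linear hH hA.
Let iAJ := ipA_conj hH hA.
Let iA_ge0 := ipA_Re_ge0 hA.

Variables (T S T' S' : V -> V) (al be P om : R).
Hypothesis linT : linear_op T.
Hypothesis linS : linear_op S.
Hypothesis linT' : linear_op T'.
Hypothesis adjT : forall x y, iA (T x) y = iA x (T' y).
Hypothesis adjS : forall x y, iA (S x) y = iA x (S' y).
Hypothesis normT : forall y, nA (T y) <= al * nA y.
Hypothesis normS : forall y, nA (S y) <= be * nA y.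
Hypothesis normT' : forall y, nA (T' y) <= al * nA y.
Hypothesis normS' : forall y, nA (S' y) <= be * nA y.
Hypothesis normTS : forall y, nA (T (S y)) <= P * nA y.
Hypothesis omegaST : forall y, normc (iA (S (T y)) y) <= om * nA y ^+ 2.
Hypothesis al_gt0 : 0 < al.
Hypothesis be_gt0 : 0 < be.
Hypothesis P_ge0 : 0 <= P.
Hypothesis om_ge0 : 0 <= om.

Let adjT_r x y : iA x (T y) = iA (T' x) y.
Proof. by rewrite iAJ adjT -iAJ. Qed.

Let adjS_r x y : iA x (S y) = iA (S' x) y.
Proof. by rewrite iAJ adjS -iAJ. Qed.

Let N := al * be + P.
Let N_ge0 : 0 <= N. Proof. by rewrite addr_ge0 // mulr_ge0 // ltW. Qed.

Let k := al / be.
Let k_gt0 : 0 < k. Proof. exact: divr_gt0. Qed.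
Let kV_gt0 : 0 < k^-1. Proof. by rewrite invr_gt0. Qed.
Let k_mul_be : k * be = al. Proof. by rewrite divfK ?gt_eqF. Qed.
Let k_mulV : k * k^-1 = 1. Proof. by rewrite mulfV ?gt_eqF. Qed.
Let kV_mul_al : k^-1 * al = be. Proof. by rewrite invf_div divfK ?gt_eqF. Qed.

Let quad z := k^-1 * nA (T z) ^+ 2 + k * nA (S' z) ^+ 2.
Let w z := T' (k^-1%:C%C *: T z) + S (k%:C%C *: S' z).

Lemma Re_ipA_w z : complex.Re (iA z (w z)) = quad z.
Proof.
rewrite /w (linear_opZ linT') (linear_opZ linS) (formDr iAL iAJ).
rewrite !(formZr iAL iAJ) !conjc_real.
by rewrite -adjT adjS_r Re_add !Re_realM -!(fnorm_sqr iA_ge0).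
Qed.

(* The cross term of [nA (w z) ^ 2] is [<T S a, b>_A]: this is where [|TS|_A] enters. *)
Lemma normA_w_sqr_le z : nA (w z) ^+ 2 <= N * quad z.
Proof.
set b := k^-1%:C%C *: T z; set a := k%:C%C *: S' z.
set t := nA (T z); set s := nA (S' z).
have nb : nA b = k^-1 * t by rewrite (fnorm_realZ iAL iAJ) // ltW.
have na : nA a = k * s by rewrite (fnorm_realZ iAL iAJ) // ltW.
have e1 : nA (T' b) ^+ 2 <= (al * (k^-1 * t)) ^+ 2.
  by rewrite -nb; apply: sqr_le_sqr (fnorm_ge0 _ _) (normT' b).
have e2 : nA (S a) ^+ 2 <= (be * (k * s)) ^+ 2.
  by rewrite -na; apply: sqr_le_sqr (fnorm_ge0 _ _) (normS a).
have e3 : complex.Re (iA (S a) (T' b)) <= P * (k * s) * (k^-1 * t).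
  rewrite -adjT -na -nb; apply: le_trans (Re_form_le iAL iAJ iA_ge0 _ _) _.
  by rewrite ler_wpM2r ?fnorm_ge0.
have ea : (al * (k^-1 * t)) ^+ 2 = al * be * (k^-1 * t ^+ 2) by rewrite -kV_mul_al; ring.
have eb : (be * (k * s)) ^+ 2 = al * be * (k * s ^+ 2) by rewrite -k_mul_be; ring.
have ec : P * (k * s) * (k^-1 * t) = P * s * t * (k * k^-1) by ring.
rewrite k_mulV mulr1 in ec.
have := ler_wpM2l P_ge0 (amgm_weighted s t k_gt0).
rewrite (fnorm_sqr iA_ge0) /w -/a -/b (formDl iAL) !(formDr iAL iAJ) !Re_add.
rewrite -!(fnorm_sqr iA_ge0) (Re_formC iAJ (S a) (T' b)) /quad -/t -/s /N.
lra.
Qed.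

Lemma quad_le z : quad z <= N * nA z ^+ 2.
Proof.
have quad_ge0 : 0 <= quad z by rewrite addr_ge0 // mulr_ge0 ?sqr_ge0 // ltW.
have : quad z ^+ 2 <= nA z ^+ 2 * (N * quad z).
  have : complex.Re (iA z (w z)) ^+ 2 <= (nA z * nA (w z)) ^+ 2.
    by apply: sqr_le_sqr (Re_form_le iAL iAJ iA_ge0 z (w z)); rewrite Re_ipA_w.
  rewrite Re_ipA_w exprMn => /le_trans; apply.
  by rewrite ler_wpM2l ?sqr_ge0 ?normA_w_sqr_le.
have [->|q_neq0] := eqVneq (quad z) 0; first by rewrite mulr_ge0 ?sqr_ge0.
have q_gt0 : 0 < quad z by rewrite lt_def q_neq0.
by move=> h; nra.
Qed.

Let M x := k%:C%C *: S' (S x) + k^-1%:C%C *: T (T' x).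
Let m x := k * nA (S x) ^+ 2 + k^-1 * nA (T' x) ^+ 2.
Let B := om / 2 + N / 4.

Lemma B_ge0 : 0 <= B.
Proof. by rewrite addr_ge0 ?divr_ge0. Qed.

Lemma Re_ipA_M x : complex.Re (iA x (M x)) = m x.
Proof.
rewrite /M (formDr iAL iAJ) !(formZr iAL iAJ) !conjc_real -adjS adjT_r.
by rewrite Re_add !Re_realM -!(fnorm_sqr iA_ge0).
Qed.

Lemma two_Re_unitM_le_m u x : normc u = 1 -> 2 * complex.Re (u * iA (T (S x)) x) <= m x.
Proof.
move=> u1; apply: le_trans (amgm_weighted _ _ k_gt0); rewrite -mulrA ler_pM2l //.
apply: le_trans (Re_unitM_le _ u1) _; rewrite adjT.
exact: normc_form_le.
Qed.

(* The estimate behind the theorem: both halves of [<(u TS + (u TS)^#) x, M x>_A]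
   split into an [omega_A(ST)] part and a [|T|_A |S|_A + |TS|_A] part. *)
Lemma Re_unitM_TS_M_le u x : normc u = 1 ->
  complex.Re (u * iA (T (S x)) (M x)) + complex.Re (conjc u * iA x (T (S (M x))))
    <= 2 * B * m x.
Proof.
move=> u1; have uJ1 : normc (conjc u) = 1 by rewrite normc_conj.
have -> : iA (T (S x)) (M x) =
    k%:C%C * iA (S (T (S x))) (S x) + k^-1%:C%C * iA (T (S x)) (T (T' x)).
  by rewrite /M (formDr iAL iAJ) !(formZr iAL iAJ) !conjc_real -adjS.
have -> : iA x (T (S (M x))) =
    k%:C%C * iA (S' (T' x)) (S' (S x)) + k^-1%:C%C * conjc (iA (S (T (T' x))) (T' x)).
  have e : iA (S' (T' x)) (T (T' x)) = conjc (iA (S (T (T' x))) (T' x)).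
    by rewrite adjT_r iAJ -adjT -adjS.
  by rewrite adjT_r adjS_r /M (formDr iAL iAJ) !(formZr iAL iAJ) !conjc_real e.
rewrite !mulrDr !Re_add.
have r1 := Re_unitM_realM_le (iA (S (T (S x))) (S x)) u1 (ltW k_gt0).
have r2 := Re_unitM_realM_le (iA (T (S x)) (T (T' x))) u1 (ltW kV_gt0).
have r3 := Re_unitM_realM_le (iA (S' (T' x)) (S' (S x))) uJ1 (ltW k_gt0).
have r4 := Re_unitM_realM_le (conjc (iA (S (T (T' x))) (T' x))) uJ1 (ltW kV_gt0).
rewrite normc_conj in r4.
have d1 := ler_wpM2l (ltW k_gt0) (omegaST (S x)).
have d4 := ler_wpM2l (ltW kV_gt0) (omegaST (T' x)).
have d2 := ler_wpM2l (ltW kV_gt0) (normc_form_le iAL iAJ iA_ge0 (T (S x)) (T (T' x))).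
have d3 := ler_wpM2l (ltW k_gt0) (normc_form_le iAL iAJ iA_ge0 (S' (T' x)) (S' (S x))).
have := weighted_product_le k_gt0 (fnorm_ge0 _ _) (fnorm_ge0 _ _) N_ge0
  (quad_le (S x)) (quad_le (T' x)).
rewrite /m /B; set L := (X in X <= _).
have -> : L = k^-1 * (nA (T (S x)) * nA (T (T' x))) + k * (nA (S' (T' x)) * nA (S' (S x))).
  by rewrite /L; ring.
have -> : 2 * (om / 2) + 2 * (N / 4) = om + N / 2 by field.
lra.
Qed.

Section Gap.
Variables (u : R[i]) (lam : R).
Hypothesis u1 : normc u = 1.
Hypothesis Re_le_lam : forall y, complex.Re (u * iA (T (S y)) y) <= lam * nA y ^+ 2.
Local Notation g := (gap_form ip A (T \o S) u lam).

Lemma Re_gap_M_ge x : 2 * (lam - B) * m x <= complex.Re (g x (M x)).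
Proof.
rewrite /gap_form /= Re_add Re_opp Re_realM Re_ipA_M.
by have := Re_unitM_TS_M_le x u1; lra.
Qed.

Lemma Re_gap_diag_le y : complex.Re (g y y) <= 2 * (lam + P) * nA y ^+ 2.
Proof.
rewrite (Re_gap_form_diag hH hA) /=.
have u'1 : normc (- u) = 1 by rewrite normcN.
have := Re_unitM_le (iA (T (S y)) y) u'1; rewrite mulNr Re_opp.
have := normc_form_le iAL iAJ iA_ge0 (T (S y)) y.
have := ler_wpM2r (fnorm_ge0 iA y) (normTS y).
rewrite expr2; lra.
Qed.

Lemma normA_M_le x : nA (M x) <= (k * be ^+ 2 + k^-1 * al ^+ 2) * nA x.
Proof.
apply: le_trans (fnormD_le iAL iAJ iA_ge0 _ _) _.
rewrite !(fnorm_realZ iAL iAJ) ?(ltW k_gt0) ?(ltW kV_gt0) // mulrDl.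
apply: lerD; rewrite -mulrA ler_wpM2l ?(ltW k_gt0) ?(ltW kV_gt0) // expr2 -mulrA.
  by apply: le_trans (normS' _) _; rewrite ler_wpM2l ?(ltW be_gt0) ?normS.
by apply: le_trans (normT _) _; rewrite ler_wpM2l ?(ltW al_gt0) ?normT'.
Qed.

(* An almost maximizing unit vector [x] is almost in the kernel of the gap form,
   while [Re g(x, M x) >= 2 (lam - B) lam]: Cauchy-Schwarz for [g] forces [lam <= B]. *)
Lemma le_B_of_approx_max :
  (forall eps, 0 < eps ->
    exists2 x, nA x = 1 & lam - eps < complex.Re (u * iA (T (S x)) x)) ->
  lam <= B.
Proof.
move=> approx; rewrite leNgt; apply/negP => B_lt_lam.
have lam_gt0 : 0 < lam := le_lt_trans B_ge0 B_lt_lam.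
have gL := gap_form_linear hH hA u lam (linear_op_comp linT linS).
have gJ := gap_form_conj hH hA (T \o S) u lam.
have g_ge0 := gap_form_ge0 hH hA Re_le_lam.
pose K := k * be ^+ 2 + k^-1 * al ^+ 2.
pose D := 2 * (lam + P) * K ^+ 2.
have D_ge0 : 0 <= D by rewrite mulr_ge0 ?sqr_ge0 // mulr_ge0 // addr_ge0 // ltW.
pose eps := Num.min (lam / 2) ((lam - B) ^+ 2 * lam ^+ 2 / (D + 1)).
have eps_gt0 : 0 < eps.
  by rewrite lt_min divr_gt0 //= divr_gt0 ?mulr_gt0 ?exprn_gt0 ?subr_gt0 // ltr_pwDr.
have [x x1 x_max] := approx eps eps_gt0.
have gxx : complex.Re (g x x) < 2 * eps.
  by rewrite (Re_gap_form_diag hH hA) x1 expr1n mulr1 /=; lra.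
have lam_le_m : lam <= m x.
  have := two_Re_unitM_le_m x u1; have : eps <= lam / 2 by rewrite ge_min lexx.
  lra.
set G := complex.Re (g x (M x)).
have G_ge : 2 * (lam - B) * lam <= G.
  apply: le_trans (Re_gap_M_ge x); rewrite ler_wpM2l // mulr_ge0 // subr_ge0 ltW //.
have G_le : G ^+ 2 <= 2 * eps * D.
  have gMM : complex.Re (g (M x) (M x)) <= D.
    apply: le_trans (Re_gap_diag_le _) _.
    rewrite /D ler_wpM2l ?mulr_ge0 ?addr_ge0 ?(ltW lam_gt0) //.
    by apply: sqr_le_sqr (fnorm_ge0 _ _) _; rewrite -[K]mulr1 -x1; apply: normA_M_le.
  have := ler_pM (g_ge0 x) (g_ge0 (M x)) (ltW gxx) gMM.
  have := form_cauchy_schwarz gL gJ g_ge0 x (M x).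
  have := sqr_ge0 (complex.Im (g x (M x))).
  rewrite -/G; lra.
have eps_le : eps * (D + 1) <= (lam - B) ^+ 2 * lam ^+ 2.
  by rewrite -ler_pdivlMr ?ltr_pwDr // ge_min lexx orbT.
have lB_gt0 : 0 < lam - B by rewrite subr_gt0.
have := sqr_le_sqr (mulr_ge0 (mulr_ge0 (ler0n _ 2) (ltW lB_gt0)) (ltW lam_gt0)) G_ge.
have -> : (2 * (lam - B) * lam) ^+ 2 = 4 * ((lam - B) ^+ 2 * lam ^+ 2) by ring.
have : 0 <= (lam - B) ^+ 2 * lam ^+ 2 by rewrite mulr_ge0 ?sqr_ge0.
rewrite mulrDr mulr1 in eps_le; lra.
Qed.

End Gap.

Lemma Re_unitM_ipA_TS_le u x : normc u = 1 -> nA x = 1 ->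
  complex.Re (u * iA (T (S x)) x) <= B.
Proof.
move=> u1 x1; pose E := [set complex.Re (u * iA (T (S y)) y) | y in [set y | nA y = 1]].
have E_le_P y : nA y = 1 -> complex.Re (u * iA (T (S y)) y) <= P.
  move=> y1; apply: le_trans (Re_unitM_le _ u1) _.
  apply: le_trans (normc_form_le iAL iAJ iA_ge0 _ _) _.
  by rewrite y1 mulr1 -[P]mulr1 -y1.
have supE : has_sup E.
  by split; [exists (complex.Re (u * iA (T (S x)) x)), x | exists P => _ [y /E_le_P ? <-]].
have Re_le_sup y : complex.Re (u * iA (T (S y)) y) <= sup E * nA y ^+ 2.
  apply: (@le_normA_homogeneous _ _ _ _ hH hA
           (fun y => complex.Re (u * iA (T (S y)) y)) 2) => //.
  - move=> c z c_gt0; rewrite (linear_opZ linS) (linear_opZ linT).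
    rewrite (formZl iAL) (formZr iAL iAJ) conjc_real.
    by rewrite mulrCA Re_realM mulrCA Re_realM mulrA -expr2.
  - move=> z z0; apply: le_trans (Re_unitM_le _ u1) _.
    by apply: le_trans (normc_form_le iAL iAJ iA_ge0 _ _) _; rewrite z0 mulr0.
  - by move=> z z1; apply: sup_upper_bound => //; exists z.
have approx eps : 0 < eps ->
    exists2 y, nA y = 1 & sup E - eps < complex.Re (u * iA (T (S y)) y).
  by move=> eps_gt0; have [_ [y y1 <-] y_max] := sup_adherent eps_gt0 supE; exists y.
apply: le_trans (le_B_of_approx_max u1 Re_le_sup approx).
by apply: sup_upper_bound => //; exists x.
Qed.

End TSBound.

Section BAOperators.
Variables (R : realType) (V : lmodType R[i]) (ip : V -> V -> R[i]) (A : V -> V).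
Hypothesis hH : is_hilbert ip.
Hypothesis hA : positive_op ip A.
Local Notation normc := (@ComplexField.Normc.normc R).
Local Notation iA := (ipA ip A).
Local Notation nA := (fnorm iA).
Hypothesis unit_ex : exists e, nA e = 1.

Lemma BA_linear X : BA ip A X -> linear_op X.
Proof. by case=> [[]]. Qed.

Lemma BA_normA_le X : BA ip A X -> forall y, nA (X y) <= opnormA ip A X * nA y.
Proof. by move=> hX; apply: normA_le_opnormA (BA_linear hX) (BA_normA_bounded hH hA hX). Qed.

Lemma BA_opnormA_ge0 X : BA ip A X -> 0 <= opnormA ip A X.
Proof. by move=> hX; apply: opnormA_ge0 (BA_normA_bounded hH hA hX) unit_ex. Qed.

Lemma BA_adjoint X : BA ip A X -> exists2 X', linear_op X' &
  (forall x y, iA (X x) y = iA x (X' y)) /\ forall y, nA (X' y) <= opnormA ip A X * nA y.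
Proof.
move=> hX; have [_ [X' [[linX' _] adjX]]] := hX; exists X' => //; split => //.
exact: adjoint_normA_le (BA_opnormA_ge0 hX) adjX (BA_normA_le hX).
Qed.

Lemma BA_comp_normA_bounded X Y : BA ip A X -> BA ip A Y ->
  exists c, forall y, nA (X (Y y)) <= c * nA y.
Proof.
move=> hX hY; exists (opnormA ip A X * opnormA ip A Y) => y.
apply: le_trans (BA_normA_le hX _) _.
by rewrite -mulrA ler_wpM2l ?BA_opnormA_ge0 ?BA_normA_le.
Qed.

Lemma Re_unitM_ipA_TS_le_BA T S u x : BA ip A T -> BA ip A S ->
  normc u = 1 -> nA x = 1 ->
  complex.Re (u * iA (T (S x)) x) <= omegaA ip A (S \o T) / 2
    + (opnormA ip A T * opnormA ip A S + opnormA ip A (T \o S)) / 4.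
Proof.
move=> hT hS u1 x1.
have [T' linT' [adjT normT']] := BA_adjoint hT.
have [S' _ [adjS normS']] := BA_adjoint hS.
have boundTS := BA_comp_normA_bounded hT hS.
have boundST := BA_comp_normA_bounded hS hT.
have linTS := linear_op_comp (BA_linear hT) (BA_linear hS).
have linST := linear_op_comp (BA_linear hS) (BA_linear hT).
have normTS := normA_le_opnormA hH hA linTS boundTS.
have omegaST := normc_ipA_le_omegaA hH hA linST boundST.
have P_ge0 := opnormA_ge0 boundTS unit_ex.
have om_ge0 := omegaA_ge0 hH hA boundST unit_ex.
have [/andP[al_gt0 be_gt0]|] := boolP ((0 < opnormA ip A T) && (0 < opnormA ip A S)).
  apply: (Re_unitM_ipA_TS_le hH hA (BA_linear hT) (BA_linear hS) linT' adjT adjS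
    (BA_normA_le hT) (BA_normA_le hS) normT' normS' normTS omegaST
    al_gt0 be_gt0 P_ge0 om_ge0 u1 x1).
rewrite negb_and -!leNgt => al_be_le0.
have al_ge0 := BA_opnormA_ge0 hT; have be_ge0 := BA_opnormA_ge0 hS.
apply: le_trans (Re_unitM_le _ u1) (le_trans _ (_ : 0 <= _)); last first.
  by rewrite addr_ge0 ?divr_ge0 ?addr_ge0 ?mulr_ge0.
rewrite adjT; apply: le_trans (normc_form_le (ipA_linear hH hA) (ipA_conj hH hA)
                                 (ipA_Re_ge0 hA) _ _) _.
have := BA_normA_le hS x; have := normT' x; rewrite x1 !mulr1.
have := fnorm_ge0 iA (S x); have := fnorm_ge0 iA (T' x).
by case/orP: al_be_le0 => ? ? ? ? ?; nra.
Qed.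

End BAOperators.

Unset Implicit Arguments.
Local Close Scope classical_set_scope.

Theorem theorem2p6 (R : realType) (V : lmodType R[i]) (ip : V -> V -> R[i])
  (A : V -> V) (T S : V -> V) :
  is_hilbert ip ->
  positive_op ip A -> (exists x : V, A x <> 0) ->
  BA ip A T -> BA ip A S ->
  omegaA ip A (T \o S) <=
    omegaA ip A (S \o T) / 2
    + (opnormA ip A T * opnormA ip A S + opnormA ip A (T \o S)) / 4.
Proof.
move=> hH hA /(exists_normA_eq1 hH hA) unit_ex hT hS.
apply: ge_sup => [|_ [x /= x1 <-]].
  have [e e1] := unit_ex.
  by exists (ComplexField.Normc.normc (ipA ip A ((T \o S) e) e)), e.
have [u u1 <-] := Re_unitM_normc (ipA ip A (T (S x)) x).
exact: Re_unitM_ipA_TS_le_BA.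
Qed.
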